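(* Let $(X,T)$ be a CAM $G$-system and let $H\subseteq G$ be a finite index normal subgroup. If there exists $x\in X$ whose $H$-orbit is dense in $X$, then the restricted action of $H$ on $X$ is CAM.
   Context: Let $G$ be a countable discrete group. A topological $G$-system $(X,T)$ consists of a compact metric space $X$ and an action $T\colon G\to\mathrm{Homeo}(X)$, $g\mapsto T_g$. The system is topologically transitive if for all nonempty open $U,V\subseteq X$ there is $g\in G$ with $T_gU\cap V\neq\emptyset$; the action is faithful if $T_g=\mathrm{id}_X$ only when $g$ is the identity. A point is periodic if its $G$-orbit is finite. The system is chaotic almost minimal (CAM) if: (1) it is topologically transitive and the action is faithful; (2) the periodic points are dense in $X$; (3) every proper closed $T$-invariant subset of $X$ is finite. *)

From HB Require Import structures.
From mathcomp Require Import all_boot all_order all_algebra.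
From mathcomp Require Import monoid.
From mathcomp Require Import all_classical all_reals all_analysis.

Set Implicit Arguments.
Unset Strict Implicit.
Unset Printing Implicit Defensive.

Local Open Scope classical_set_scope.
Local Open Scope group_scope.

Section CAMDefs.
Context {G : groupType} {X : topologicalType}.

(* T : G -> Homeo(X) is a (left) group action by homeomorphisms.  Given the
   action laws, continuity of every T g makes each T g a homeomorphism
   (with inverse T g^-1). *)
Definition is_action (T : G -> X -> X) : Prop :=
  [/\ T 1 = id,
      (forall g h x, T (g * h) x = T g (T h x)) &
      (forall g, continuous (T g))].

(* The notions below are for the action T restricted to a subset S of G
   (S = [set: G] gives the G-system itself, S = H the restricted action). *)
Definition orbit_on (S : set G) (T : G -> X -> X) (x : X) : set X :=
  [set T g x | g in S].

Definition topologically_transitive_on (S : set G) (T : G -> X -> X) : Prop :=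
  forall U V : set X, open U -> open V -> U !=set0 -> V !=set0 ->
    exists2 g, S g & (T g @` U `&` V) !=set0.

Definition faithful_on (S : set G) (T : G -> X -> X) : Prop :=
  forall g, S g -> T g = id -> g = 1.

Definition periodic_point_on (S : set G) (T : G -> X -> X) (x : X) : Prop :=
  finite_set (orbit_on S T x).

Definition invariant_on (S : set G) (T : G -> X -> X) (A : set X) : Prop :=
  forall g, S g -> T g @` A `<=` A.

Definition CAM_on (S : set G) (T : G -> X -> X) : Prop :=
  [/\ topologically_transitive_on S T /\ faithful_on S T,
      dense [set x | periodic_point_on S T x] &
      (forall A : set X, closed A -> invariant_on S T A -> A <> [set: X] ->
         finite_set A)].

End CAMDefs.

Section SubgroupDefs.
Context {G : groupType}.

Definition is_subgroup (H : set G) : Prop :=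
  [/\ H 1, (forall a b, H a -> H b -> H (a * b)) & (forall a, H a -> H a^-1)].

Definition is_normal (H : set G) : Prop :=
  forall g h, H h -> H (g^-1 * h * g).

Definition finite_index (H : set G) : Prop :=
  finite_set [set [set g * h | h in H] | g in [set: G]].

End SubgroupDefs.

From HB Require Import structures.
From mathcomp Require Import all_boot all_order all_algebra.
From mathcomp Require Import monoid.
From mathcomp Require Import all_classical all_reals all_analysis.

Set Implicit Arguments.
Unset Strict Implicit.
Unset Printing Implicit Defensive.

(* Transitivity, faithfulness and density of periodic points pass to H
   directly, using the dense H-orbit for the first.  For a proper closed
   H-invariant set A, its G-saturation G.A is the finite union of the closed
   sets gA over the cosets gH.  If G.A is proper it is finite by the CAM
   property of G, hence so is A.  Otherwise finitely many closed sets gA cover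
   X, so one of them has interior; then A has interior, meets the dense
   H-orbit, and being closed and H-invariant must be all of X. *)

Local Open Scope classical_set_scope.

Lemma closed_bigsetU_interior (X : topologicalType) (I : eqType)
    (F : I -> set X) (s : seq I) (U : set X) :
  (forall i, i \in s -> closed (F i)) -> open U -> U !=set0 ->
  U `<=` \big[setU/set0]_(i <- s) F i ->
  exists2 i, i \in s & exists V, [/\ open V, V !=set0 & V `<=` F i].
Proof.
elim: s U => [|i s IH] U cF oU [u Uu] sUF.
  by move: (sUF u Uu); rewrite big_nil.
have [[y [Uy nFy]]|UFi] := pselect ((U `\` F i) !=set0).
  have [||||j js FjV] := IH (U `\` F i).
  - by move=> j js; apply: cF; rewrite inE js orbT.
  - by apply: openI => //; rewrite openC; apply: cF; rewrite inE eqxx.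
  - by exists y.
  - by move=> z [Uz nFz]; move: (sUF z Uz); rewrite big_cons => -[].
  by exists j => //; rewrite inE js orbT.
exists i; first by rewrite inE eqxx.
exists U; split => //; first by exists u.
by move=> z Uz; apply: contrapT => nFz; apply: UFi; exists z.
Qed.

Lemma closed_bigcup_interior (X : topologicalType) (I : choiceType)
    (A : set I) (F : I -> set X) (U : set X) :
  finite_set A -> (forall i, A i -> closed (F i)) -> open U -> U !=set0 ->
  U `<=` \bigcup_(i in A) F i ->
  exists2 i, A i & exists V, [/\ open V, V !=set0 & V `<=` F i].
Proof.
move=> finA cF oU U0; rewrite -bigsetU_fset_set // => sUF.
have [|i iA FiV] := closed_bigsetU_interior _ oU U0 sUF.
  by move=> i; rewrite in_fset_set // in_setE; apply: cF.
by exists i => //; move: iA; rewrite in_fset_set // in_setE.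
Qed.

Section Action.
Local Open Scope group_scope.
Variables (G : groupType) (X : topologicalType) (T : G -> X -> X).
Hypothesis actT : is_action T.

Lemma act1 x : T 1 x = x.
Proof. by case: actT => ->. Qed.

Lemma actM g h x : T (g * h) x = T g (T h x).
Proof. by case: actT. Qed.

Lemma actK g x : T g^-1 (T g x) = x.
Proof. by rewrite -actM mulVg act1. Qed.

Lemma actKV g x : T g (T g^-1 x) = x.
Proof. by rewrite -actM mulgV act1. Qed.

Lemma image_actE g (A : set X) : T g @` A = T g^-1 @^-1` A.
Proof.
apply/seteqP; split => y; first by move=> [a Aa <-]; rewrite /= actK.
by move=> Ay; exists (T g^-1 y) => //; rewrite actKV.
Qed.

Lemma closed_image_act g (A : set X) : closed A -> closed (T g @` A).
Proof.
case: actT => _ _ cT; rewrite image_actE.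
by move: (cT g^-1) => /continuous_closedP; apply.
Qed.

Lemma open_image_act g (A : set X) : open A -> open (T g @` A).
Proof.
case: actT => _ _ cT; rewrite image_actE.
by move: (cT g^-1) => /continuousP; apply.
Qed.

Lemma faithful_on_sub (S S' : set G) :
  S `<=` S' -> faithful_on S' T -> faithful_on S T.
Proof. by move=> sSS' fS' g /sSS'; apply: fS'. Qed.

Lemma periodic_point_on_sub (S S' : set G) x :
  S `<=` S' -> periodic_point_on S' T x -> periodic_point_on S T x.
Proof.
by move=> sSS'; apply: sub_finite_set => _ [g /sSS' S'g <-]; exists g.
Qed.

Lemma invariant_orbit_on_sub (S : set G) (A : set X) x :
  invariant_on S T A -> A x -> orbit_on S T x `<=` A.
Proof. by move=> invA Ax _ [g Sg <-]; apply: (invA g Sg); exists x. Qed.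

Section Subgroup.
Variable S : set G.
Hypothesis subS : is_subgroup S.

Lemma orbit_on_act g x : S g -> orbit_on S T (T g x) = orbit_on S T x.
Proof.
case: subS => _ SM SV Sg; apply/seteqP; split => _ [h Sh <-].
  by exists (h * g); [apply: SM | rewrite actM].
by exists (h * g^-1); [apply: SM; last apply: SV | rewrite actM actK].
Qed.

Lemma transitive_on_dense_orbit x :
  dense (orbit_on S T x) -> topologically_transitive_on S T.
Proof.
case: subS => _ SM SV dx U V oU oV U0 V0.
have [u [Uu [g Sg gxu]]] := dx U U0 oU.
have [v [Vv [h Sh hxv]]] := dx V V0 oV.
subst u v.
exists (h * g^-1); first by apply: SM => //; apply: SV.
by exists (T h x); split => //; exists (T g x) => //; rewrite -actM mulgVK.
Qed.

Lemma closed_invariant_dense_orbit (A : set X) x :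
  closed A -> invariant_on S T A -> dense (orbit_on S T x) ->
  A `&` orbit_on S T x !=set0 -> A = [set: X].
Proof.
move=> cA invA dx [y [Ay [g Sg gxy]]]; subst y.
have sxA : orbit_on S T x `<=` A.
  by rewrite -(orbit_on_act x Sg); apply: invariant_orbit_on_sub.
apply/seteqP; split => // y _; apply: contrapT => nAy.
have [z [nAz /sxA Az]] := dx (~` A) (ex_intro _ y nAy) (closed_openC cA).
exact: nAz.
Qed.

Lemma closed_invariant_interior (A V : set X) x :
  closed A -> invariant_on S T A -> dense (orbit_on S T x) ->
  open V -> V !=set0 -> V `<=` A -> A = [set: X].
Proof.
move=> cA invA dx oV V0 sVA; apply: (closed_invariant_dense_orbit cA invA dx).
by have [y [/sVA Ay xy]] := dx V V0 oV; exists y.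
Qed.

End Subgroup.

Definition act_set (C : set G) (A : set X) : set X := \bigcup_(g in C) T g @` A.

Lemma sub_act_set_setT (A : set X) : A `<=` act_set [set: G] A.
Proof. by move=> a Aa; exists 1 => //; exists a; rewrite ?act1. Qed.

Lemma invariant_act_set_setT (A : set X) :
  invariant_on [set: G] T (act_set [set: G] A).
Proof.
move=> g _ _ [_ [h _ [a Aa <-]] <-].
by exists (g * h) => //; exists a; rewrite ?actM.
Qed.

Definition left_cosets (H : set G) : set (set G) :=
  [set [set g * h | h in H] | g in [set: G]].

Section Saturation.
Variables (H : set G) (A : set X).
Hypotheses (H1 : H 1) (invA : invariant_on H T A).

Lemma act_set_coset g : act_set [set g * h | h in H] A = T g @` A.
Proof.
apply/seteqP; split => y.
  move=> [_ [h Hh <-] [a Aa <-]]; rewrite actM.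
  by exists (T h a) => //; apply: (invA Hh); exists a.
by move=> [a Aa <-]; exists (g * 1); [exists 1 | exists a; rewrite ?mulg1].
Qed.

Lemma act_set_cosetsE :
  \bigcup_(c in left_cosets H) act_set c A = act_set [set: G] A.
Proof.
apply/seteqP; split => y.
  by move=> [c [g _ <-]]; rewrite act_set_coset => -[a Aa <-]; exists g.
move=> [g _ gAy]; exists [set g * h | h in H]; first by exists g.
by rewrite act_set_coset.
Qed.

Lemma closed_act_set_setT :
  finite_index H -> closed A -> closed (act_set [set: G] A).
Proof.
move=> finH cA; rewrite -act_set_cosetsE; apply: closed_bigcup => // c [g _ <-].
by rewrite act_set_coset; apply: closed_image_act.
Qed.

End Saturation.

Lemma finite_invariant_finite_index (H : set G) (A : set X) x :
  is_subgroup H -> finite_index H -> dense (orbit_on H T x) ->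
  (forall B : set X, closed B -> invariant_on [set: G] T B ->
     B <> [set: X] -> finite_set B) ->
  closed A -> invariant_on H T A -> A <> [set: X] -> finite_set A.
Proof.
move=> subH finH dx finG cA invA nA; have [H1 _ _] := subH.
have [GAnT|/contrapT GAT] := pselect (act_set [set: G] A <> [set: X]).
  apply: (sub_finite_set (@sub_act_set_setT A)); apply: finG => //.
    exact: (closed_act_set_setT H1 invA finH cA).
  exact: invariant_act_set_setT.
have [a0 nAa0] : exists a, ~ A a.
  apply: contrapT => /forallNP nA'; apply: nA.
  by apply/seteqP; split => // a _; apply: contrapT.
have [c [g _ gHc] [V [oV V0 VgA]]] : exists2 c, left_cosets H c &
    exists V, [/\ open V, V !=set0 & V `<=` act_set c A].
  apply: (closed_bigcup_interior finH _ openT (ex_intro _ a0 I)).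
    move=> c [g _ <-]; rewrite (act_set_coset H1 invA).
    exact: closed_image_act.
  by rewrite (act_set_cosetsE H1 invA) GAT.
rewrite -gHc (act_set_coset H1 invA) in VgA.
case: nA; apply: (closed_invariant_interior subH cA invA dx
  (open_image_act g^-1 oV)).
- by have [v Vv] := V0; exists (T g^-1 v); exists v.
- by move=> _ [v /VgA [a Aa <-] <-]; rewrite actK.
Qed.

End Action.

Theorem corollary3p6 (G : groupType) (R : realType) (X : metricType R)
  (T : G -> X -> X) (H : set G) :
  countable [set: G] ->
  compact [set: X] ->
  is_action T ->
  CAM_on [set: G] T ->
  is_subgroup H -> is_normal H -> finite_index H ->
  (exists x : X, dense (orbit_on H T x)) ->
  CAM_on H T.
Proof.
move=> _ _ actT [[_ faithG] perG finG] subH _ finH [x dx].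
split; first split.
- exact: (transitive_on_dense_orbit actT subH dx).
- exact: (faithful_on_sub (subsetT H) faithG).
- move=> O O0 oO; have [y [Oy pery]] := perG O O0 oO.
  by exists y; split => //; apply: (periodic_point_on_sub (subsetT H)).
- by move=> A; apply: (finite_invariant_finite_index actT subH finH dx finG).
Qed.
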